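(* Consider a hierarchical tensor factorization with mode tree $\mathcal T$ whose weight matrices $(W^{(\nu)}(t))_{\nu\in\mathcal T}$ evolve under gradient flow on $\phi_H$ for $t\ge0$. Then for all $\nu\in\mathrm{int}(\mathcal T)$, $r\in[R_\nu]$ and $w,w'\in\mathrm{LC}(\nu,r)$: $$\|w(t)\|^2-\|w'(t)\|^2=\|w(0)\|^2-\|w'(0)\|^2\quad\text{for all } t\ge0.$$
   Context: Fix $N\in\mathbb N$, $D_1,\dots,D_N\in\mathbb N$; $[K]:=\{1,\dots,K\}$. Norms are Frobenius norms, $\otimes$ the tensor product. A mode tree $\mathcal T$ over $[N]$ is a rooted tree whose nodes are labeled by subsets of $[N]$, with exactly $N$ leaves labeled $\{1\},\dots,\{N\}$, and where each interior node's label is the union of its children's labels; nodes are identified with labels, the root is $[N]$, $\mathrm{int}(\mathcal T)$ denotes interior nodes, $Pa(\nu)$ the parent, $C(\nu)$ the children (in a fixed order). A hierarchical tensor factorization is given by $R_\nu\in\mathbb N$ ($\nu\in\mathrm{int}(\mathcal T)$), with $R_{Pa([N])}:=1$, $R_{\{n\}}:=D_n$, and weight matrices $W^{(\nu)}\in\mathbb R^{R_\nu\times R_{Pa(\nu)}}$, $\nu\in\mathcal T$. Intermediate tensors: $\mathcal W^{(\{n\},r)}:=W^{(\{n\})}_{:,r}$; for $\nu\in\mathrm{int}(\mathcal T)\setminus\{[N]\}$ (leaves to root) and $r\in[R_{Pa(\nu)}]$, $\mathcal W^{(\nu,r)}:=\pi_\nu\big(\sum_{r'=1}^{R_\nu}W^{(\nu)}_{r',r}\bigotimes_{\nu_c\in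 C(\nu)}\mathcal W^{(\nu_c,r')}\big)$; end tensor $\mathcal W_H:=\pi_{[N]}\big(\sum_{r'=1}^{R_{[N]}}W^{([N])}_{r',1}\bigotimes_{\nu_c\in C([N])}\mathcal W^{(\nu_c,r')}\big)\in\mathbb R^{D_1\times\cdots\times D_N}$, where $\pi_\nu$ permutes modes (ordered by children, each child's elements ascending) into ascending order of the elements of $\nu$. $\mathrm{LC}(\nu,r)$ ($\nu\in\mathrm{int}(\mathcal T)$, $r\in[R_\nu]$) is the collection of vectors $W^{(\nu)}_{r,:}$ and $W^{(\nu_c)}_{:,r}$, $\nu_c\in C(\nu)$. Let $\mathcal L_H:\mathbb R^{D_1\times\cdots\times D_N}\to\mathbb R_{\ge0}$ be differentiable and locally smooth, $\phi_H((W^{(\nu)})_\nu):=\mathcal L_H(\mathcal W_H)$; gradient flow: $\frac{d}{dt}W^{(\nu)}(t)=-\frac{\partial}{\partial W^{(\nu)}}\phi_H((W^{(\nu')}(t))_{\nu'})$ for all $\nu\in\mathcal T$, $t\ge0$. *)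

From HB Require Import structures.
From mathcomp Require Import all_boot all_order all_algebra.
From mathcomp Require Import all_classical all_reals all_analysis.
Unset Printing Implicit Defensive.
Import Order.TTheory GRing.Theory Num.Theory.
Import numFieldNormedType.Exports.
Local Open Scope ring_scope.

(* Mode trees.  Modes are 'I_N (mode n+1 of the paper is n : 'I_N).  Since  *)
(* nodes are identified with their labels, a mode tree is encoded by its    *)
(* set of labels T : {set {set 'I_N}}; the tree structure (parent/children) *)
(* is the Hasse diagram of inclusion.  A family of labels comes from a mode *)
(* tree iff it contains [N] and every singleton, no empty label, and is     *)
(* laminar (two labels are nested or disjoint).                             *)
Definition mode_tree (N : nat) (T : {set {set 'I_N}}) : Prop :=
  [/\ [set: 'I_N] \in T,
      forall n : 'I_N, [set n] \in T,
      (@finset.set0 _) \notin T &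
      forall A B, A \in T -> B \in T ->
        [|| A \subset B, B \subset A | [disjoint A & B]]].
Arguments mode_tree {N}.

Definition is_child (N : nat) (T : {set {set 'I_N}}) (c nu : {set 'I_N}) : bool :=
  [&& c \in T, nu \in T, c \proper nu &
      [forall k in T, ~~ ((c \proper k) && (k \proper nu))]].
Arguments is_child {N}.

Definition children (N : nat) (T : {set {set 'I_N}}) (nu : {set 'I_N}) :=
  [set c | is_child T c nu].
Arguments children {N}.

Definition parent (N : nat) (T : {set {set 'I_N}}) (nu : {set 'I_N}) :=
  [pick mu | is_child T nu mu].
Arguments parent {N}.

Definition leaf_of (N : nat) (nu : {set 'I_N}) : option 'I_N :=
  [pick n | nu == [set n]].
Arguments leaf_of {N}.

Definition interior_node (N : nat) (T : {set {set 'I_N}}) (nu : {set 'I_N}) : bool :=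
  (nu \in T) && (leaf_of nu == None).
Arguments interior_node {N}.

Definition rk (N : nat) (D : 'I_N -> nat) (Rk : {set 'I_N} -> nat)
  (nu : {set 'I_N}) : nat :=
  if leaf_of nu is Some n then D n else Rk nu.
Arguments rk {N}.

Definition rkPa (N : nat) (T : {set {set 'I_N}}) (D : 'I_N -> nat)
  (Rk : {set 'I_N} -> nat) (nu : {set 'I_N}) : nat :=
  if nu == [set: 'I_N] then 1%N
  else if parent T nu is Some mu then rk D Rk mu else 1%N.
Arguments rkPa {N}.

(* Tensors in R^{D_1 x ... x D_N}: functions on multi-indices.             *)
Definition idx (N : nat) (D : 'I_N -> nat) := {dffun forall n : 'I_N, 'I_(D n)}.
Arguments idx {N}.

(* Weights: W nu i j is the (i,j) entry (0-based) of W^{(nu)}, meaningful   *)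
(* for i < R_nu, j < R_{Pa(nu)}; other entries are never used.             *)
Definition weights (R : realType) (N : nat) := {set 'I_N} -> nat -> nat -> R.

(* Intermediate tensor W^{(nu,r)}, as a function of the full multi-index   *)
(* (it only depends on the coordinates in nu).  The permutation pi_nu of   *)
(* the paper is built in: entries are addressed by mode, not by position.  *)
(* Recursion from leaves to root, with fuel k (k = N suffices).            *)
Fixpoint itensor (R : realType) (N : nat) (T : {set {set 'I_N}}) (D : 'I_N -> nat)
  (Rk : {set 'I_N} -> nat) (W : weights R N) (k : nat)
  (nu : {set 'I_N}) (r : nat) (i : idx D) : R :=
  if leaf_of nu is Some n then W nu (i n : nat) r
  else if k is k'.+1 then
    \sum_(r' < rk D Rk nu)
       W nu r' r * \prod_(c in children T nu) itensor R N T D Rk W k' c r' i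
  else 0.
Arguments itensor {R N}.

(* End tensor W_H (the column index of W^{([N])} is 1, i.e. 0 here). *)
Definition end_tensor (R : realType) (N : nat) (T : {set {set 'I_N}})
  (D : 'I_N -> nat) (Rk : {set 'I_N} -> nat) (W : weights R N) : idx D -> R :=
  itensor T D Rk W N [set: 'I_N] 0%N.
Arguments end_tensor {R N}.

Definition phiH (R : realType) (N : nat) (T : {set {set 'I_N}})
  (D : 'I_N -> nat) (Rk : {set 'I_N} -> nat) (L : (idx D -> R) -> R)
  (W : weights R N) : R :=
  L (end_tensor T D Rk W).
Arguments phiH {R N}.

Definition fnorm (R : realType) (I : finType) (X : I -> R) : R :=
  Num.sqrt (\sum_(i : I) X i ^+ 2).
Arguments fnorm {R I}.

Definition is_gradient (R : realType) (I : finType) (L : (I -> R) -> R)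
  (G : (I -> R) -> I -> R) : Prop :=
  forall X (e : R), 0 < e -> exists2 d : R, 0 < d &
    forall H : I -> R, fnorm H < d ->
      `| L (fun i => X i + H i) - L X - \sum_(i : I) G X i * H i | <= e * fnorm H.
Arguments is_gradient {R I}.

Definition differentiableT (R : realType) (I : finType) (L : (I -> R) -> R) :=
  exists G, is_gradient L G.
Arguments differentiableT {R I}.

Definition locally_smooth (R : realType) (I : finType) (L : (I -> R) -> R) :=
  exists G, is_gradient L G /\
    forall X : I -> R, exists2 d : R, 0 < d & exists K : R,
      forall Y Z : I -> R,
        fnorm (fun i => Y i - X i) < d -> fnorm (fun i => Z i - X i) < d ->
        fnorm (fun i => G Y i - G Z i) <= K * fnorm (fun i => Y i - Z i).
Arguments locally_smooth {R I}.

Definition upd (R : realType) (N : nat) (W : weights R N) (nu : {set 'I_N})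
  (i j : nat) (s : R) : weights R N :=
  fun mu a b => if [&& mu == nu, a == i & b == j] then s else W mu a b.
Arguments upd {R N}.

Definition dphi (R : realType) (N : nat) (T : {set {set 'I_N}})
  (D : 'I_N -> nat) (Rk : {set 'I_N} -> nat) (L : (idx D -> R) -> R)
  (W : weights R N) (nu : {set 'I_N}) (i j : nat) : R :=
  derive1 (fun s => phiH T D Rk L (upd W nu i j s)) (W nu i j).
Arguments dphi {R N}.

Local Open Scope classical_set_scope.
Definition deriv_nonneg (R : realType) (f : R -> R) (t l : R) : Prop :=
  (fun s => (f s - f t) / (s - t)) @ within (fun s : R => 0 <= s) t^' --> l.
Arguments deriv_nonneg {R}.

Local Close Scope classical_set_scope.
Definition gradient_flow (R : realType) (N : nat) (T : {set {set 'I_N}})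
  (D : 'I_N -> nat) (Rk : {set 'I_N} -> nat) (L : (idx D -> R) -> R)
  (Wt : R -> weights R N) : Prop :=
  forall t : R, 0 <= t -> forall nu, nu \in T ->
  forall i j : nat, (i < rk D Rk nu)%N -> (j < rkPa T D Rk nu)%N ->
    deriv_nonneg (fun s => Wt s nu i j) t (- dphi T D Rk L (Wt t) nu i j).
Arguments gradient_flow {R N}.

(* LC(nu, r): None = the row W^{(nu)}_{r,:}; Some c = the column           *)
(* W^{(c)}_{:,r} of a child c of nu.                                       *)
Definition in_LC (N : nat) (T : {set {set 'I_N}}) (nu : {set 'I_N})
  (w : option {set 'I_N}) : bool :=
  if w is Some c then c \in children T nu else true.
Arguments in_LC {N}.

Definition LC_sqnorm (R : realType) (N : nat) (T : {set {set 'I_N}})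
  (D : 'I_N -> nat) (Rk : {set 'I_N} -> nat) (W : weights R N)
  (nu : {set 'I_N}) (r : nat) (w : option {set 'I_N}) : R :=
  if w is Some c then \sum_(a < rk D Rk c) W c a r ^+ 2
  else \sum_(b < rkPa T D Rk nu) W nu r b ^+ 2.
Arguments LC_sqnorm {R N}.

(* Along the gradient flow, d/dt |w|^2 = -2 <w, d phi_H / d w> for every
   w in LC(nu, r).  The end tensor is affine in the row W^(nu)_{r,:}, so by
   Euler's identity the pairing for the row equals <grad L(W_H), W_H - W_H'>,
   where W_H' is the end tensor with that row zeroed.  Likewise for a column
   W^(c)_{:,r} of a child c, with W_H' the end tensor with that column zeroed.
   Both zeroings give the same tensor: the row and the intermediate tensor
   W^(c,r) enter W_H only through the r-th summand at nu.  So all squared norms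
   in LC(nu, r) have the same derivative, and their differences are constant. *)

From mathcomp Require Import all_boot all_order all_algebra.
From mathcomp Require Import all_classical all_reals all_analysis.
From mathcomp Require Import fintype finset.
From mathcomp Require Import ring lra.
Import Order.TTheory GRing.Theory Num.Theory.
Import numFieldNormedType.Exports.
Local Open Scope ring_scope.

Section ModeTree.
Context {N : nat} {T : {set {set 'I_N}}}.
Hypothesis hT : mode_tree T.

Lemma childrenP c nu : reflect
  [/\ c \in T, nu \in T, c \proper nu &
      [forall k in T, ~~ ((c \proper k) && (k \proper nu))]]
  (c \in children T nu).
Proof. by rewrite inE; apply: and4P. Qed.

Lemma child_proper {c nu} : c \in children T nu -> c \proper nu.
Proof. by case/childrenP. Qed.

Lemma mode_tree_memN0 {nu} : nu \in T -> exists n, n \in nu.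
Proof.
case: hT => _ _ T0 _ nuT; have [nu0|[n n_nu]] := set_0Vmem nu; last by exists n.
by move: T0; rewrite -nu0 nuT.
Qed.

Lemma mode_tree_meet {nu mu n} : nu \in T -> mu \in T -> n \in nu -> n \in mu ->
  (nu \subset mu) || (mu \subset nu).
Proof.
case: hT => _ _ _ lam nuT muT n_nu n_mu.
case/or3P: (lam _ _ nuT muT) => [->|->|dis]; rewrite ?orbT //.
by rewrite (disjointFr dis n_nu) in n_mu.
Qed.

(* Two distinct children of a node, or two parents of a node, would be
   comparable by laminarity, contradicting the absence of intermediate nodes. *)
Lemma child_uniq {c1 c2 nu n} : c1 \in children T nu -> c2 \in children T nu ->
  n \in c1 -> n \in c2 -> c1 = c2.
Proof.
move=> /childrenP [c1T _ c1nu /forall_inP h1] /childrenP [c2T _ c2nu /forall_inP h2].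
move=> n1 n2; apply/eqP; apply/negPn/negP => ne.
case/orP: (mode_tree_meet c1T c2T n1 n2) => sub.
- by have := h1 _ c2T; rewrite c2nu properEneq ne sub.
- by have := h2 _ c1T; rewrite c1nu properEneq eq_sym ne sub.
Qed.

Lemma parent_uniq {c nu1 nu2} : c \in children T nu1 -> c \in children T nu2 ->
  nu1 = nu2.
Proof.
move=> c_nu1 c_nu2; have /childrenP [cT nu1T cnu1 /forall_inP h1] := c_nu1.
have /childrenP [_ nu2T cnu2 /forall_inP h2] := c_nu2.
have [n nc] := mode_tree_memN0 cT.
have n1 := subsetP (proper_sub cnu1) _ nc; have n2 := subsetP (proper_sub cnu2) _ nc.
apply/eqP; apply/negPn/negP => ne.
case/orP: (mode_tree_meet nu1T nu2T n1 n2) => sub.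
- by have := h2 _ nu1T; rewrite cnu1 /= properEneq ne sub.
- by have := h1 _ nu2T; rewrite cnu2 /= properEneq eq_sym ne sub.
Qed.

Lemma rkPa_child (D : 'I_N -> nat) Rk {c nu} : c \in children T nu ->
  rkPa T D Rk c = rk D Rk nu.
Proof.
move=> c_nu; rewrite /rkPa; case: eqP => [cN|_].
  by have := child_proper c_nu; rewrite cN properE subsetT andbF.
rewrite /parent; case: pickP => [mu c_mu|/(_ nu)]; last by move: c_nu; rewrite inE => ->.
by rewrite (@parent_uniq c mu nu) // inE.
Qed.

End ModeTree.

Section Affine.
Context {R : realType}.
Implicit Types (f g : (nat -> R) -> R) (x y : nat -> R).

Definition affine f :=
  forall x y a, f (fun b => x b + a * y b) - f x = a * (f y - f (fun _ => 0)).

Lemma eq_affine f g : f =1 g -> affine f -> affine g.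
Proof. by move=> fg hf x y a; rewrite -!fg hf. Qed.

Lemma affine_cst K : affine (fun _ => K).
Proof. by move=> x y a; rewrite !subrr mulr0. Qed.

Lemma affine_coord b : affine (fun x => x b).
Proof. by move=> x y a; rewrite subr0 [x b + _]addrC addrK. Qed.

Lemma affine_mulr f K : affine f -> affine (fun x => f x * K).
Proof. by move=> hf x y a; rewrite -mulrBl hf -mulrA mulrBl. Qed.

Lemma affine_mull f K : affine f -> affine (fun x => K * f x).
Proof. by move=> hf x y a; rewrite -mulrBr hf mulrCA mulrBr. Qed.

Lemma affine_sum n (F : 'I_n -> (nat -> R) -> R) :
  (forall j, affine (F j)) -> affine (fun x => \sum_(j < n) F j x).
Proof.
move=> hF x y a; rewrite -sumrB.
by under eq_bigr do rewrite hF; rewrite -mulr_sumr sumrB.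
Qed.

Lemma affine_prod (I : finType) (P : pred I) (F : I -> (nat -> R) -> R) j0 :
  affine (F j0) -> (forall j x, P j -> j != j0 -> F j x = F j (fun _ => 0)) ->
  affine (fun x => \prod_(j | P j) F j x).
Proof.
move=> F0 Fc; have [Pj0|nPj0] := boolP (P j0).
  apply: (@eq_affine (fun x => F j0 x * \prod_(j | P j && (j != j0)) F j (fun _ => 0))).
    move=> x; rewrite [RHS](bigD1 j0) //=; congr (_ * _).
    by apply: eq_bigr => j /andP [Pj ne]; rewrite Fc.
  exact: affine_mulr.
apply: (@eq_affine (fun _ => \prod_(j | P j) F j (fun _ => 0))); last exact: affine_cst.
move=> x; apply: eq_bigr => j Pj; rewrite Fc //.
by apply: contraNneq nPj0 => <-.
Qed.

Lemma affine_expand f x M : affine f ->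
  f (fun b => if (b < M)%N then x b else 0) - f (fun _ => 0) =
  \sum_(b < M) x b * (f (fun b' => (b' == b)%:R) - f (fun _ => 0)).
Proof.
move=> hf; elim: M => [|M IH].
  by rewrite big_ord0 (_ : (fun b => _) = (fun _ => 0)) ?subrr //; apply: funext.
rewrite big_ord_recr /= -IH -(hf (fun b => if (b < M)%N then x b else 0)).
suff -> : (fun b => if (b < M.+1)%N then x b else 0) =
  (fun b => (if (b < M)%N then x b else 0) + x M * (b == M)%:R) by lra.
apply: funext => b; rewrite ltnS leq_eqVlt; case: ltngtP => [bM|bM|->] /=.
- by rewrite mulr0 addr0.
- by rewrite mulr0 addr0.
- by rewrite mulr1 add0r.
Qed.

End Affine.

Section IntermediateTensors.
Context {R : realType} {N : nat} {T : {set {set 'I_N}}} {D : 'I_N -> nat}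
  {Rk : {set 'I_N} -> nat}.
Hypothesis hT : mode_tree T.

Local Notation itensor := (itensor T D Rk).

Lemma itensor_local (W W' : weights R N) (m : {set 'I_N}) :
  (forall mu a b, mu != m -> W' mu a b = W mu a b) ->
  forall k (mu : {set 'I_N}) q i, ~~ (m \subset mu) ->
  itensor W' k mu q i = itensor W k mu q i.
Proof.
move=> WW'; have W'E (mu : {set 'I_N}) a b : ~~ (m \subset mu) -> W' mu a b = W mu a b.
  by move=> m_mu; apply: WW'; apply: contraNneq m_mu => ->.
elim=> [|k IH] mu q i m_mu /=; case: (leaf_of mu) => [n|]; rewrite ?W'E //.
apply: eq_bigr => r' _; rewrite W'E //; congr (_ * _).
apply: eq_bigr => c c_mu; apply: IH; apply: contra m_mu => m_c.
by apply: subset_trans m_c _; apply: proper_sub (child_proper c_mu).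
Qed.

Section Affinity.
Context {Wx : (nat -> R) -> weights R N} {m : {set 'I_N}}.
Hypothesis mT : m \in T.
Hypothesis Wx_off : forall x x' mu a b, mu != m -> Wx x mu a b = Wx x' mu a b.
Hypothesis Wx_affine : forall a b, affine (fun x => Wx x m a b).

Let x0 : nat -> R := fun _ => 0.

Lemma weight_affine mu a b : affine (fun x => Wx x mu a b).
Proof.
have [->|mu_m] := eqVneq mu m; first exact: Wx_affine.
by apply: (@eq_affine _ (fun _ => Wx x0 mu a b)) (affine_cst _) => x; exact: Wx_off.
Qed.

Lemma itensor_off k (c : {set 'I_N}) q i : ~~ (m \subset c) ->
  (fun x => itensor (Wx x) k c q i) =1 (fun _ => itensor (Wx x0) k c q i).
Proof.
by move=> m_c x; apply: (itensor_local (Wx x0) (Wx x) m) => // mu a b; apply: Wx_off.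
Qed.

(* Node m occurs in at most one factor of each product along the recursion,
   since distinct children of a node are disjoint. *)
Lemma itensor_affine k (mu : {set 'I_N}) q i : affine (fun x => itensor (Wx x) k mu q i).
Proof.
elim: k mu q i => [|k IH] mu q i /=.
  by case: (leaf_of mu) => [n|]; [exact: weight_affine | exact: affine_cst].
case: (leaf_of mu) => [n|]; first exact: weight_affine.
have [->|mu_m] := eqVneq mu m; apply: affine_sum => r'.
  apply: (@eq_affine _ (fun x => Wx x m r' q *
      \prod_(c in children T m) itensor (Wx x0) k c r' i)); last first.
    exact/affine_mulr/weight_affine.
  move=> x; congr (_ * _); apply: eq_bigr => c c_m; symmetry; apply: itensor_off.
  by have := child_proper c_m; rewrite properE => /andP [].
apply: (@eq_affine _ (fun x => Wx x0 mu r' q *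
    \prod_(c in children T mu) itensor (Wx x) k c r' i)).
  by move=> x; rewrite (Wx_off x0 x).
pose cm := odflt m [pick c in children T mu | m \subset c].
apply/affine_mull/(@affine_prod _ _ _ _ cm).
  exact: IH.
move=> c x c_mu; rewrite /cm; case: pickP => [c' /andP [c'_mu m_c'] /= ne|none _].
  apply: itensor_off; apply: contra ne => m_c; apply/eqP.
  have [n n_m] := mode_tree_memN0 hT mT.
  exact: (child_uniq hT c_mu c'_mu (subsetP m_c _ n_m) (subsetP m_c' _ n_m)).
by apply: itensor_off; move: (none c); rewrite c_mu => /negbT.
Qed.

End Affinity.

Lemma itensor_eq_in_range (W W' : weights R N) :
  (forall mu a b, mu \in T -> (a < rk D Rk mu)%N -> (b < rkPa T D Rk mu)%N ->
     W mu a b = W' mu a b) ->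
  forall k (mu : {set 'I_N}) q i, mu \in T -> (q < rkPa T D Rk mu)%N ->
  itensor W k mu q i = itensor W' k mu q i.
Proof.
move=> WW'; elim=> [|k IH] mu q i muT q_lt /=;
  case El: (leaf_of mu) => [n|] //; try by apply: WW'; rewrite // /rk El.
apply: eq_bigr => r' _; rewrite WW' //; congr (_ * _).
apply: eq_bigr => c c_mu; have /childrenP [cT _ _ _] := c_mu.
by apply: IH; rewrite ?(rkPa_child hT D Rk c_mu).
Qed.

Lemma end_tensor_eq_in_range (W W' : weights R N) :
  (forall mu a b, mu \in T -> (a < rk D Rk mu)%N -> (b < rkPa T D Rk mu)%N ->
     W mu a b = W' mu a b) ->
  end_tensor T D Rk W = end_tensor T D Rk W'.
Proof.
move=> WW'; apply: funext => i; apply: itensor_eq_in_range => //.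
  by case: hT.
by rewrite /rkPa eqxx.
Qed.

Definition set_row (W : weights R N) nu r (x : nat -> R) : weights R N :=
  fun mu a b => if (mu == nu) && (a == r) then x b else W mu a b.

Definition set_col (W : weights R N) c r (y : nat -> R) : weights R N :=
  fun mu a b => if (mu == c) && (b == r) then y a else W mu a b.

Section RowColumn.
Variables (W : weights R N) (nu c : {set 'I_N}) (r : nat).
Hypothesis nu_int : leaf_of nu = None.
Hypothesis c_nu : c \in children T nu.

Let row0 := set_row W nu r (fun _ => 0).
Let col0 := set_col W c r (fun _ => 0).

Lemma itensor_set_col0 k i : itensor col0 k c r i = 0.
Proof.
rewrite /col0 /set_col; case: k => [|k] /=; case: (leaf_of c) => [n|//];
  rewrite ?eqxx //.
by apply: big1 => r' _; rewrite mul0r.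
Qed.

(* Both the r-th row of W^(nu) and the tensor W^(c,r) enter the end tensor only
   through the r-th summand at node nu, which either zeroing kills. *)
Lemma itensor_row0_col0 k mu q i : (mu != c) || (q != r) ->
  itensor row0 k mu q i = itensor col0 k mu q i.
Proof.
have c_neq_nu : c != nu by apply: contraTneq (child_proper c_nu) => ->; rewrite properxx.
have row0_nu a b : row0 nu a b = if a == r then 0 else W nu a b.
  by rewrite /row0 /set_row eqxx.
have col0_nu a b : col0 nu a b = W nu a b.
  by rewrite /col0 /set_col eq_sym (negbTE c_neq_nu).
have row0_col0 (m : {set 'I_N}) a b : m != nu -> (m != c) || (b != r) ->
    row0 m a b = col0 m a b.
  rewrite /row0 /col0 /set_row /set_col => /negbTE -> /=.
  by case: (m == c); case: (b == r).
elim: k mu q i => [|k IH] mu q i mq /=; case El: (leaf_of mu) => [n|] //.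
1,2: by apply: row0_col0 => //; apply/eqP => mu_nu; rewrite mu_nu nu_int in El.
have [->|mu_nu] := eqVneq mu nu; apply: eq_bigr => r' _.
  rewrite row0_nu col0_nu; have [->|r'_r] := eqVneq (r' : nat) r.
    by rewrite mul0r (bigD1 c) //= itensor_set_col0 mul0r mulr0.
  by congr (_ * _); apply: eq_bigr => c' _; apply: IH; rewrite r'_r orbT.
rewrite row0_col0 //; congr (_ * _); apply: eq_bigr => c' c'_mu; apply: IH.
apply/orP; left; apply: contra_neq mu_nu => c'c.
by apply: (parent_uniq hT c'_mu); rewrite c'c.
Qed.

Lemma end_tensor_row0_col0 : end_tensor T D Rk row0 = end_tensor T D Rk col0.
Proof.
apply: funext => i; apply: itensor_row0_col0; apply/orP; left.
by apply: contraTneq (child_proper c_nu) => <-; rewrite properE subsetT andbF.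
Qed.

End RowColumn.
End IntermediateTensors.

Section Gradient.
Context {R : realType} {I : finType}.

Lemma fnormZ (h : R) (B : I -> R) : fnorm (fun i => h * B i) = `|h| * fnorm B.
Proof.
rewrite /fnorm -sqrtr_sqr -sqrtrM ?sqr_ge0 // mulr_sumr.
by congr Num.sqrt; apply: eq_bigr => i _; rewrite exprMn.
Qed.

Lemma fnorm_ge0 (B : I -> R) : 0 <= fnorm B.
Proof. exact: sqrtr_ge0. Qed.

Lemma derive1_gradient_line {L : (I -> R) -> R} {G} : is_gradient L G ->
  forall A B s0, derive1 (fun s => L (fun i => A i + s * B i)) s0 =
  \sum_i G (fun i => A i + s0 * B i) i * B i.
Proof.
move=> LG A B s0; set X := fun i => A i + s0 * B i; set l := \sum_i _.
rewrite /derive1; apply: cvg_lim => //; apply/cvgrPdist_le => e e0.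
have c0 : 0 < fnorm B + 1 by have := fnorm_ge0 B; lra.
have [d d0 LX] := LG X (e / (fnorm B + 1)) (divr_gt0 e0 c0).
near=> h.
have h0 : h != 0 by near: h; exact: nbhs_dnbhs_neq.
have hd : `|h| < d / (fnorm B + 1) by near: h; apply: dnbhs0_lt; exact: divr_gt0.
have hB : fnorm (fun i => h * B i) <= `|h| * (fnorm B + 1).
  by rewrite fnormZ ler_wpM2l //; lra.
have hBd : fnorm (fun i => h * B i) < d.
  by apply: le_lt_trans hB _; rewrite -ltr_pdivlMr.
have := LX _ hBd; rewrite (_ : \sum_i _ = h * l); last first.
  by rewrite /l mulr_sumr; apply: eq_bigr => i _; rewrite mulrCA.
rewrite -/X (_ : (fun i => A i + (h + s0) * B i) = (fun i => X i + h * B i)); last first.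
  by apply: funext => i; rewrite /X; ring.
move=> /le_trans /(_ (ler_wpM2l (ltW (divr_gt0 e0 c0)) hB)).
rewrite mulrCA divfK ?gt_eqF // => bound.
rewrite -[_ *: _]/(h^-1 * _) -normrN opprB -[l](mulKf h0) -mulrBr normrM normfV.
by rewrite ler_pdivrMl ?normr_gt0 // mulrC.
Unshelve. all: by end_near.
Qed.

End Gradient.

Section DerivNonneg.
Context {R : realType}.
Implicit Types (f g : R -> R) (t l : R).
Local Open Scope classical_set_scope.

Lemma deriv_nonneg_cvg f t l : deriv_nonneg f t l ->
  f @ within (fun s : R => 0 <= s) t^' --> f t.
Proof.
move=> df; have dt : (fun s => s - t) @ within (fun s : R => 0 <= s) t^' --> 0.
  rewrite -(subrr t); apply: cvgB; last exact: cvg_cst.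
  by apply: cvg_within_filter; apply: cvg_within_filter; exact: cvg_id.
have : (fun s => f t + (f s - f t) / (s - t) * (s - t)) @
    within (fun s : R => 0 <= s) t^' --> f t + l * 0.
  exact: cvgD (cvg_cst _) (cvgM df dt).
rewrite mulr0 addr0 => lim_ft; apply: cvg_trans lim_ft; apply: near_eq_cvg.
near=> s.
have st : s != t by near: s; apply: cvg_within; exact: (@nbhs_dnbhs_neq R t).
by rewrite divfK ?subr_eq0 // addrC subrK.
Unshelve. all: by end_near.
Qed.

Lemma deriv_nonneg_sqr f t l : deriv_nonneg f t l ->
  deriv_nonneg (fun s => f s ^+ 2) t (2 * f t * l).
Proof.
move=> df; rewrite /deriv_nonneg (_ : (fun s => (f s ^+ 2 - f t ^+ 2) / (s - t)) =
  (fun s => (f s + f t) * ((f s - f t) / (s - t)))); last first.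
  by apply: funext => s; rewrite mulrA subr_sqr [(f s - f t) * _]mulrC.
rewrite mulr2n mulrDl mul1r.
apply: cvgM; last exact: df.
by apply: cvgD; [exact: deriv_nonneg_cvg df | exact: cvg_cst].
Qed.

Lemma deriv_nonneg_sub f g t l1 l2 : deriv_nonneg f t l1 -> deriv_nonneg g t l2 ->
  deriv_nonneg (fun s => f s - g s) t (l1 - l2).
Proof.
move=> df dg; rewrite /deriv_nonneg (_ : (fun s => (f s - g s - (f t - g t)) / (s - t)) =
  (fun s => (f s - f t) / (s - t) - (g s - g t) / (s - t))); last first.
  by apply: funext => s; rewrite -mulrBl; congr (_ * _); ring.
exact: cvgB.
Qed.

Lemma deriv_nonneg_sum n (F : 'I_n -> R -> R) (l : 'I_n -> R) t :
  (forall j, deriv_nonneg (F j) t (l j)) ->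
  deriv_nonneg (fun s => \sum_(j < n) F j s) t (\sum_(j < n) l j).
Proof.
move=> dF; rewrite /deriv_nonneg
  (_ : (fun s => (\sum_(j < n) F j s - \sum_(j < n) F j t) / (s - t)) =
  (fun s => \sum_(j < n) ((F j s - F j t) / (s - t)))); last first.
  by apply: funext => s; rewrite -sumrB mulr_suml.
apply: cvg_big => [[a b]|j _]; last exact: dF.
by apply: cvgD; [exact: cvg_fst | exact: cvg_snd].
Qed.

Lemma deriv_nonneg_sum_sqr n (F : 'I_n -> R -> R) (l : 'I_n -> R) t :
  (forall j, deriv_nonneg (F j) t (- l j)) ->
  deriv_nonneg (fun s => \sum_(j < n) F j s ^+ 2) t (- (2 * \sum_(j < n) F j t * l j)).
Proof.
move=> dF; rewrite mulr_sumr -sumrN; under eq_bigr do rewrite mulrA -mulrN.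
by apply: deriv_nonneg_sum => j; apply: deriv_nonneg_sqr.
Qed.

Lemma deriv_nonneg0_bound {g t} : deriv_nonneg g t 0 -> forall e, 0 < e ->
  exists2 d, 0 < d & forall s, 0 <= s -> `|s - t| < d -> `|g s - g t| <= e * `|s - t|.
Proof.
move=> /cvgrPdist_le dg e e0; have /nbhs_ballP [d /= d0 near_t] := dg e e0.
exists d => // s s0 st_d; have [->|st] := eqVneq s t.
  by rewrite !subrr normr0 mulr0.
have := near_t s _ st s0; rewrite /ball /= distrC => /(_ st_d).
by rewrite sub0r normrN normrM normfV ler_pdivrMr ?normr_gt0 ?subr_eq0.
Qed.

(* Extending g by the constant g 0 to the left gives a function with zero
   derivative on the whole line, since x |-> max x 0 is 1-Lipschitz. *)
Lemma deriv_nonneg0_cst g : (forall t, 0 <= t -> deriv_nonneg g t 0) ->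
  forall t, 0 <= t -> g t = g 0.
Proof.
move=> g'0 t t0; pose h (s : R) := g (Num.max s 0).
suff h'0 (x : R) : is_derive x (1 : R) h 0.
  by have := @is_derive_0_is_cst R h t 0 h'0; rewrite /h maxxx max_l.
have max_lip (a b : R) : `|Num.max a 0 - Num.max b 0| <= `|a - b|.
  case: (leP a 0) => a0; case: (leP b 0) => b0;
    rewrite ?(max_r a0) ?(max_r b0) ?(max_l (ltW a0)) ?(max_l (ltW b0)).
  - by rewrite subrr normr0.
  - by rewrite sub0r normrN gtr0_norm // ltr0_norm ?subr_lt0 //; lra.
  - by rewrite subr0 !gtr0_norm ?subr_gt0 //; lra.
  - by [].
have max_ge0 (a : R) : 0 <= Num.max a 0 by rewrite le_max lexx orbT.
suff q0 : (fun k => k^-1 *: (h (k *: 1 + x) - h x)) @ 0^' --> 0.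
  by apply: DeriveDef; [exact: cvgP q0 | exact: cvg_lim q0].
apply/cvgrPdist_le => e e0.
have [d d0 near_x] := deriv_nonneg0_bound (g'0 _ (max_ge0 x)) _ e0.
near=> k.
have k0 : k != 0 by near: k; exact: nbhs_dnbhs_neq.
have kd : `|k| < d by near: k; exact: dnbhs0_lt.
have lip := max_lip (k + x) x; rewrite addrK in lip.
rewrite sub0r normrN normrZ normfV ler_pdivrMl ?normr_gt0 // /h [_%:A]mulr1.
apply: le_trans (near_x _ (max_ge0 _) (le_lt_trans lip kd)) _.
by rewrite [X in _ <= X]mulrC ler_wpM2l // ltW.
Unshelve. all: by end_near.
Qed.

End DerivNonneg.

Section Balance.
Context {R : realType} {N : nat} {D : 'I_N -> nat} {T : {set {set 'I_N}}}
  {Rk : {set 'I_N} -> nat} {L : (idx D -> R) -> R} {G : (idx D -> R) -> idx D -> R}.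
Hypothesis hT : mode_tree T.
Hypothesis hG : is_gradient L G.

Local Notation E W := (end_tensor T D Rk W).
Local Notation dphi := (dphi T D Rk L).

(* A slice P of the weights is a family of weights parameterised by a vector
   x, in which the entry (m, row b, col b) is the coordinate x b. *)
Section Slice.
Variables (W : weights R N) (P : (nat -> R) -> weights R N) (w : nat -> R).
Variables (M : nat) (m : {set 'I_N}) (row col : nat -> nat).
Hypothesis P_affine : forall i, affine (fun x => E (P x) i).
Hypothesis P_range :
  forall x x', (forall b, (b < M)%N -> x b = x' b) -> E (P x) = E (P x').
Hypothesis P_upd :
  forall b s, upd W m (row b) (col b) s = P (fun b' => if b' == b then s else w b').
Hypothesis P_w : P w = W.

Let P0 := P (fun _ => 0).
Let Pe b := P (fun b' => (b' == b)%:R).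

Lemma dphi_slice b :
  dphi W m (row b) (col b) = \sum_i G (E W) i * (E (Pe b) i - E P0 i).
Proof.
pose wb b' := if b' == b then 0 else w b'.
have E_upd s i : E (upd W m (row b) (col b) s) i = E (P wb) i + s * (E (Pe b) i - E P0 i).
  rewrite -(P_affine i wb) addrC subrK P_upd; congr (E (P _) i); apply: funext => b'.
  by rewrite /wb; case: eqP; rewrite ?mulr1 ?mulr0 ?add0r ?addr0.
have upd_id : upd W m (row b) (col b) (W m (row b) (col b)) = W.
  apply: funext => mu; apply: funext => a; apply: funext => a'.
  by rewrite /upd; case: and3P => // [[/eqP -> /eqP -> /eqP ->]].
rewrite /dphi /phiH (_ : (fun s => L (E (upd W m (row b) (col b) s))) =
  (fun s => L (fun i => E (P wb) i + s * (E (Pe b) i - E P0 i)))); last first.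
  by apply: funext => s; congr L; apply: funext => i; rewrite E_upd.
rewrite (derive1_gradient_line hG) (_ : (fun i => _ + _ * _) = E W) //.
by apply: funext => i; rewrite -E_upd upd_id.
Qed.

Lemma slice_euler :
  \sum_(b < M) w b * dphi W m (row b) (col b) = \sum_i G (E W) i * (E W i - E P0 i).
Proof.
under eq_bigr do rewrite dphi_slice mulr_sumr.
rewrite exchange_big /=; apply: eq_bigr => i _.
have -> : E W i - E P0 i = \sum_(b < M) w b * (E (Pe b) i - E P0 i).
  rewrite -(affine_expand _ w M (P_affine i)) -P_w; congr (_ - _).
  by rewrite (P_range w (fun b => if (b < M)%N then w b else 0)) // => b ->.
by rewrite mulr_sumr; apply: eq_bigr => b _; rewrite mulrCA.
Qed.

End Slice.

Section Node.
Variables (nu : {set 'I_N}) (r : nat).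
Hypothesis nuT : nu \in T.
Hypothesis nu_int : leaf_of nu = None.

Lemma row_euler (W : weights R N) :
  \sum_(b < rkPa T D Rk nu) W nu r b * dphi W nu r b =
  \sum_i G (E W) i * (E W i - E (set_row W nu r (fun _ => 0)) i).
Proof.
apply: (@slice_euler W (set_row W nu r) (W nu r) _ nu (fun _ => r) id).
- move=> i; rewrite /end_tensor.
  apply: (itensor_affine hT nuT) => [x x' mu a b /negbTE|a b].
    by rewrite /set_row => ->.
  by rewrite /set_row eqxx; case: (a == r); [exact: affine_coord | exact: affine_cst].
- move=> x x' xx'; apply: end_tensor_eq_in_range => // mu a b _ _.
  by rewrite /set_row; case: andP => // [[/eqP -> _]]; exact: xx'.
- move=> b s; apply: funext => mu; apply: funext => a; apply: funext => b'.
  rewrite /upd /set_row; case: (eqVneq mu nu) => [->|] //=.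
  by case: (eqVneq a r) => [->|] //=; case: (eqVneq b' b).
- apply: funext => mu; apply: funext => a; apply: funext => b.
  by rewrite /set_row; case: andP => // [[/eqP -> /eqP ->]].
Qed.

Lemma col_euler (W : weights R N) c : c \in children T nu ->
  \sum_(a < rk D Rk c) W c a r * dphi W c a r =
  \sum_i G (E W) i * (E W i - E (set_col W c r (fun _ => 0)) i).
Proof.
move=> c_nu; have /childrenP [cT _ _ _] := c_nu.
apply: (@slice_euler W (set_col W c r) (fun a => W c a r) _ c id (fun _ => r)).
- move=> i; rewrite /end_tensor.
  apply: (itensor_affine hT cT) => [x x' mu a b /negbTE|a b].
    by rewrite /set_col => ->.
  by rewrite /set_col eqxx; case: (b == r); [exact: affine_coord | exact: affine_cst].
- move=> x x' xx'; apply: end_tensor_eq_in_range => // mu a b _ a_lt _.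
  by rewrite /set_col; case: andP a_lt => // [[/eqP -> _]]; exact: xx'.
- move=> a s; apply: funext => mu; apply: funext => a'; apply: funext => b.
  rewrite /upd /set_col; case: (eqVneq mu c) => [->|] //=.
  by case: (eqVneq b r) => [->|] //=; rewrite ?andbT ?andbF //; case: (eqVneq a' a).
- apply: funext => mu; apply: funext => a; apply: funext => b.
  by rewrite /set_col; case: andP => // [[/eqP -> /eqP ->]].
Qed.

Lemma row_col_balance (W : weights R N) c : c \in children T nu ->
  \sum_(b < rkPa T D Rk nu) W nu r b * dphi W nu r b =
  \sum_(a < rk D Rk c) W c a r * dphi W c a r.
Proof.
move=> c_nu; rewrite row_euler (col_euler _ _ c_nu).
by rewrite (end_tensor_row0_col0 hT W _ _ r nu_int c_nu).
Qed.

End Node.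
End Balance.

Theorem lemma2 (R : realType) (N : nat) (D : 'I_N -> nat)
  (T : {set {set 'I_N}}) (Rk : {set 'I_N} -> nat)
  (L : (idx D -> R) -> R) (Wt : R -> weights R N) :
  mode_tree T ->
  differentiableT L ->
  locally_smooth L ->
  gradient_flow T D Rk L Wt ->
  forall nu : {set 'I_N}, interior_node T nu ->
  forall r : nat, (r < rk D Rk nu)%N ->
  forall w w' : option {set 'I_N}, in_LC T nu w -> in_LC T nu w' ->
  forall t : R, 0 <= t ->
    LC_sqnorm T D Rk (Wt t) nu r w - LC_sqnorm T D Rk (Wt t) nu r w'
    = LC_sqnorm T D Rk (Wt 0) nu r w - LC_sqnorm T D Rk (Wt 0) nu r w'.
Proof.
(* Local smoothness of L only matters for the existence of the flow. *)
move=> hT [G hG] _ flow nu /andP [nuT /eqP nu_int] r r_lt.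
pose K t := \sum_(b < rkPa T D Rk nu) Wt t nu r b * dphi T D Rk L (Wt t) nu r b.
have sqnorm_flow w : in_LC T nu w -> forall t, 0 <= t ->
    deriv_nonneg (fun s => LC_sqnorm T D Rk (Wt s) nu r w) t (- (2 * K t)).
  case: w => [c|] /= w_LC t t0.
    have /childrenP [cT _ _ _] := w_LC.
    rewrite /K (row_col_balance hT hG nu r nuT nu_int _ _ w_LC).
    by apply: deriv_nonneg_sum_sqr => a; apply: flow; rewrite ?(rkPa_child hT D Rk w_LC).
  by apply: deriv_nonneg_sum_sqr => b; apply: flow.
move=> w w' w_LC w'_LC.
pose g s := LC_sqnorm T D Rk (Wt s) nu r w - LC_sqnorm T D Rk (Wt s) nu r w'.
have g'0 s : 0 <= s -> deriv_nonneg g s 0.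
  move=> s0; rewrite -(subrr (- (2 * K s))).
  by apply: deriv_nonneg_sub; apply: sqnorm_flow.
exact: deriv_nonneg0_cst g'0.
Qed.
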